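(* Let $\mathcal{F}=\{\sum_{i=1}^m a_i\,\mathrm{ReLU}(w_i^\top x+b_i): m\in\mathbb{N},\ w_i\in\mathbb{R}^d,\ a_i,b_i\in\mathbb{R}\}$ be the class of two-layer ReLU networks on $\mathbb{R}^d$, and let $P,Q$ be distributions supported on the unit sphere $S^{d-1}=\{x:\|x\|_2=1\}$. Suppose there exists $\epsilon>0$ with $$Q\big(\{x\in S^{d-1}:\mathrm{dist}(x,\mathrm{supp}(P))\ge\epsilon\}\big)>0.$$ Then for every $M>0$ there exists $f\in\mathcal{F}$ with $\mathbb{E}_P[f(x)^2]=0$ and $\mathbb{E}_Q[f(x)^2]\ge M$.
   Context: $\mathrm{ReLU}(z)=\max(z,0)$; $\mathrm{supp}(P)$ is the support of $P$ and $\mathrm{dist}(x,S)=\inf_{s\in S}\|x-s\|_2$. *)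

From HB Require Import structures.
From mathcomp Require Import all_boot all_order all_algebra.
From mathcomp Require Import all_classical all_reals all_analysis.
Set Implicit Arguments. Unset Strict Implicit. Unset Printing Implicit Defensive.
Import Order.TTheory GRing.Theory Num.Theory.
Import numFieldNormedType.Exports.
Local Open Scope classical_set_scope.
Local Open Scope ring_scope.

(* R^d as row vectors, with its Borel sigma-algebra (generated by the open sets
   of the usual topology on 'rV[R]_d; all norms on R^d induce this topology). *)
Definition BorelRd (R : realType) (d : nat) :=
  g_sigma_algebraType (@open ('rV[R]_d)).

Definition norm2 {R : realType} {d : nat} (x : 'rV[R]_d) : R :=
  Num.sqrt (\sum_(i < d) (x ord0 i) ^+ 2).
Definition dotp {R : realType} {d : nat} (w x : 'rV[R]_d) : R :=
  \sum_(i < d) w ord0 i * x ord0 i.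

Definition sphere {R : realType} (d : nat) : set 'rV[R]_d :=
  [set x | norm2 x = 1].

Definition dist {R : realType} {d : nat} (x : 'rV[R]_d) (S : set 'rV[R]_d) : R :=
  inf [set norm2 (x - s) | s in S].

Definition relu {R : realType} (z : R) : R := Num.max z 0.

Definition supp {R : realType} {d : nat}
  (P : probability (BorelRd R d) R) : set 'rV[R]_d :=
  [set x | forall U : set 'rV[R]_d, open U -> U x -> (0 < P U)%E].

Definition relu_net {R : realType} {d : nat} (f : 'rV[R]_d -> R) : Prop :=
  exists (m : nat) (a b : 'I_m -> R) (w : 'I_m -> 'rV[R]_d),
    forall x, f x = \sum_(i < m) a i * relu (dotp (w i) x + b i).

From HB Require Import structures.
From mathcomp Require Import all_boot all_order all_algebra.
From mathcomp Require Import all_classical all_reals all_analysis.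
From mathcomp Require Import measurable_realfun lra ring finmap.
Import Order.TTheory GRing.Theory Num.Theory.
Import numFieldNormedType.Exports.
Local Open Scope classical_set_scope.
Local Open Scope ring_scope.

(* Two-layer ReLU networks can detect mass of Q away from supp P.
   Let A be the set of points of the sphere at distance >= eps from supp P;
   Q A > 0 by hypothesis.  A is closed in the compact sphere, so by a finite
   covering argument there is a point a of A such that the cap
   B = A /\ {x | <a, x> > 1 - eps^2/32} still has positive Q-mass q.
   Consider the single neuron f x = alpha * ReLU(<a, x> - c) with
   c = 1 - eps^2/8.  On the sphere, <a, x> >= c forces |a - x| < eps, so
   f vanishes on the sphere outside a compact cap disjoint from supp P; such
   a cap is P-negligible (again by compactness), hence E_P[f^2] = 0.  On B,
   f >= alpha * 3 eps^2/32, so E_Q[f^2] >= M for a suitable alpha. *)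

Section Borel_Euclidean.
Context {R : realType} {d : nat}.
Local Notation V := 'rV[R]_d.
Local Notation T := (BorelRd R d).

Lemma open_measurable_Rd {U : set V} : open U -> measurable (U : set T).
Proof. by move=> oU; apply: sub_sigma_algebra. Qed.

Lemma closed_measurable_Rd {C : set V} : closed C -> measurable (C : set T).
Proof. by move=> /closed_openC/open_measurable_Rd/measurableC; rewrite setCK. Qed.

Lemma continuous_measurable_Rd (g : V -> R) :
  continuous g -> measurable_fun setT (g : T -> R).
Proof.
move=> /continuousP cg.
apply: (measurability _ (measurable_realfun.RGenOpens.measurableE R)).
move=> _ [_ [a [b ->] <-]]; rewrite setTI; apply: open_measurable_Rd.
exact/cg/interval_open.
Qed.

Lemma dotp_continuous (w : V) : continuous (dotp w).
Proof.
apply: continuous_big => [|i _ x]; first exact: add_continuous.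
by apply: continuousM; [exact: cst_continuous | exact: coord_continuous].
Qed.

Lemma norm2_continuous : continuous (@norm2 R d).
Proof.
move=> x; apply: continuous_comp; last exact: sqrt_continuous.
apply: continuous_big => [|i _ y]; first exact: add_continuous.
by rewrite /GRing.exp /=; apply: continuousM; exact: coord_continuous.
Qed.

Lemma norm2_sub_continuous (s : V) : continuous (fun y : V => norm2 (y - s)).
Proof.
move=> y; apply: continuous_comp; last exact: norm2_continuous.
by apply: continuousB; [exact: cvg_id | exact: cst_continuous].
Qed.

Lemma norm2_ge0 (x : V) : 0 <= norm2 x.
Proof. exact: sqrtr_ge0. Qed.

Lemma dist_le {S : set V} (x : V) {s : V} : S s -> dist x S <= norm2 (x - s).
Proof.
move=> Ss; apply: ge_inf; last by exists s.
by exists 0 => _ [t _ <-]; exact: norm2_ge0.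
Qed.

(* Points at distance >= eps > 0 from S form a closed set: its complement
   is the union of the open eps-balls around the points of S. *)
Lemma dist_ge_closed (S : set V) (eps : R) : 0 < eps ->
  closed [set x : V | eps <= dist x S].
Proof.
move=> eps_gt0; have [[s0 Ss0]|S0] := pselect (S !=set0); last first.
  suff -> : [set x : V | eps <= dist x S] = set0 by exact: closed0.
  have -> : S = set0 by apply/seteqP; split => // t St; apply: S0; exists t.
  apply/seteqP; split => // x /=.
  by rewrite /dist image_set0 inf0 leNgt eps_gt0.
have ballU : ~` [set x : V | eps <= dist x S] =
    \bigcup_(s in S) [set y | norm2 (y - s) < eps].
  apply/seteqP; split => x /=.
  - move/negP; rewrite -ltNge => dist_lt.
    have [_ [t St <-] lt] := inf_lt (S := [set norm2 (x - s) | s in S])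
      (ex_intro _ _ (ex_intro2 _ _ s0 Ss0 erefl)) dist_lt.
    by exists t.
  - move=> [s Ss hs]; apply/negP; rewrite -ltNge.
    exact: le_lt_trans (dist_le x Ss) hs.
rewrite -[X in closed X]setCK ballU; apply: open_closedC.
apply: bigcup_open => s _.
exact: open_comp (fun y _ => norm2_sub_continuous s y) (@open_lt _ eps).
Qed.

Lemma sphere_sum_sq (x : V) : sphere x -> \sum_(i < d) (x ord0 i) ^+ 2 = 1.
Proof.
rewrite /sphere /norm2 /= => h.
rewrite -(@sqr_sqrtr _ (\sum_(i < d) (x ord0 i) ^+ 2)) ?h ?expr1n //.
by apply: sumr_ge0 => i _; exact: sqr_ge0.
Qed.

Lemma dotp_self_sphere (x : V) : sphere x -> dotp x x = 1.
Proof.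
by move=> /sphere_sum_sq <-; apply: eq_bigr => i _; rewrite expr2.
Qed.

Lemma sphere_dist_sq {a x : V} : sphere a -> sphere x ->
  norm2 (a - x) ^+ 2 = 2 - 2 * dotp a x.
Proof.
move=> /sphere_sum_sq ha /sphere_sum_sq hx.
rewrite /norm2 sqr_sqrtr; last by apply: sumr_ge0 => i _; exact: sqr_ge0.
have -> : \sum_(i < d) (a - x) ord0 i ^+ 2 =
  \sum_(i < d) (a ord0 i ^+ 2 + x ord0 i ^+ 2 - 2 * (a ord0 i * x ord0 i)).
  by apply: eq_bigr => i _; rewrite !mxE; ring.
by rewrite !big_split /= ha hx /dotp sumrN -mulr_sumr; ring.
Qed.

Lemma sphere_closed : closed (@sphere R d).
Proof.
have -> : @sphere R d = norm2 @^-1` [set r | r = 1] by [].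
by apply: preimage_closed; [move=> y _; exact: norm2_continuous | exact: closed_eq].
Qed.

Lemma sphere_compact : compact (@sphere R d).
Proof.
apply: (@subclosed_compact _ _ [set v : V | forall i, `[-1, 1]%classic (v ord0 i)]).
- exact: sphere_closed.
- exact: (@rV_compact R d (fun=> `[-1, 1]%classic) (fun=> @segment_compact R (-1) 1)).
move=> x /sphere_sum_sq h i /=.
have : (x ord0 i) ^+ 2 <= 1.
  by rewrite -h (bigD1 i) //= lerDl; apply: sumr_ge0 => j _; exact: sqr_ge0.
by rewrite in_itv /= => hx; apply/andP; split; nra.
Qed.

Lemma sphere_subset_compact {C : set V} :
  closed C -> C `<=` @sphere R d -> compact C.
Proof. by move=> Ccl CS; exact: subclosed_compact Ccl sphere_compact CS. Qed.
End Borel_Euclidean.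

Section Negligible_compact.
Context {R : realType} {d : nat}.
Local Notation V := 'rV[R]_d.
Local Notation T := (BorelRd R d).

Lemma measure_not_gt0 (mu : {measure set T -> \bar R}) (W : set T) :
  measurable W -> ~ (0 < mu W)%E -> mu.-negligible W.
Proof.
move=> mW mW0; apply/negligibleP => //.
by apply/eqP; rewrite eq_le measure_ge0 andbT leNgt; apply/negP.
Qed.

(* A compact set which is negligible near each of its points is negligible:
   finitely many of the witnessing neighbourhoods cover it. *)
Lemma compact_locally_negligible (mu : {measure set T -> \bar R}) (K : set V) :
  compact K ->
  (forall x, K x -> exists U : set V,
     [/\ open U, U x & mu.-negligible (K `&` U : set T)]) ->
  mu.-negligible (K : set T).
Proof.
move=> cK loc.
have /choice[U hU] : forall x, exists U : set V, K x ->
    [/\ open U, U x & mu.-negligible (K `&` U : set T)].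
  move=> x; have [Kx|nKx] := pselect (K x); last by exists setT.
  by have [U hU] := loc x Kx; exists U.
rewrite compact_cover in cK.
have [D DK cover] := cK V K U (fun x Kx => let: And3 o _ _ := hU x Kx in o)
  (fun x Kx => ex_intro2 _ _ x Kx (let: And3 _ Ux _ := hU x Kx in Ux)).
have KD : (K : set T) `<=` \big[setU/set0]_(x <- D) (K `&` U x).
  by rewrite -bigcup_fset => y Ky; have [x Dx Uy] := cover y Ky; exists x.
apply: (negligibleS KD); rewrite big_seq; elim/big_rec: _ => [|x N Dx NN].
  exact: negligible_set0.
apply: negligibleU NN; have /DK /set_mem Kx : x \in D := Dx.
by have [] := hU x Kx.
Qed.

Lemma compact_mass_concentrates {mu : {measure set T -> \bar R}} {K : set V}
    {U : V -> set V} :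
  compact K -> measurable (K : set T) ->
  (forall x, K x -> open (U x) /\ U x x) ->
  (0 < mu K)%E -> exists2 a, K a & (0 < mu (K `&` U a : set T))%E.
Proof.
move=> cK mK hU muK; apply: contrapT => noconc.
suff /(negligibleP _ mK) muK0 : mu.-negligible (K : set T).
  by rewrite muK0 ltxx in muK.
apply: compact_locally_negligible cK _ => x Kx.
have [oU Ux] := hU x Kx; exists (U x); split => //.
apply: measure_not_gt0; first by apply: measurableI => //; exact: open_measurable_Rd.
by move=> pos; apply: noconc; exists x.
Qed.

Lemma compact_off_supp_negligible {P : probability T R} {K : set V} :
  compact K -> (forall x, K x -> ~ supp P x) -> P.-negligible (K : set T).
Proof.
move=> cK offS; apply: compact_locally_negligible cK _ => x /offS nSx.
have [W [oW Wx nW]] : exists W : set V, [/\ open W, W x & ~ (0 < P W)%E].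
  apply: contrapT => hn; apply: nSx => W oW Wx.
  by apply: contrapT => hp; apply: hn; exists W.
exists W; split => //; apply: (negligibleS (@subIsetr _ _ _)).
by apply: measure_not_gt0 nW; exact: open_measurable_Rd.
Qed.
End Negligible_compact.

Section Square_integrals.
Context {dT : measure_display} {T : measurableType dT} {R : realType}.
Variable mu : {measure set T -> \bar R}.

Lemma integral_sq_eq0 {g : T -> R} {N : set T} :
  measurable_fun setT g -> mu.-negligible N ->
  (forall x, ~ N x -> g x = 0) -> (\int[mu]_x (g x ^+ 2)%:E = 0)%E.
Proof.
move=> mg negN g0.
rewrite (@ge0_ae_eq_integral _ _ _ mu setT _ (cst 0%E)) ?integral0 //.
- by apply/measurable_EFinP; exact: measurable_funX.
- by move=> x _; rewrite lee_fin sqr_ge0.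
apply: negligibleS negN => x /= gx; apply: contrapT => nNx.
by apply: gx => _; rewrite g0 // expr0n.
Qed.

Lemma integral_sq_ge {g : T -> R} {B : set T} {k : R} :
  measurable B -> measurable_fun setT g -> 0 <= k ->
  (forall x, B x -> k <= g x) ->
  ((k ^+ 2)%:E * mu B <= \int[mu]_x (g x ^+ 2)%:E)%E.
Proof.
move=> mB mg k0 gk.
have mg2 : measurable_fun setT (fun x => (g x ^+ 2)%:E).
  by apply/measurable_EFinP; exact: measurable_funX.
have g2_ge0 (x : T) : setT x -> (0 <= (g x ^+ 2)%:E)%E.
  by move=> _; rewrite lee_fin sqr_ge0.
rewrite -integral_cst //.
apply: le_trans (ge0_subset_integral mu mB measurableT mg2 g2_ge0 (@subsetT _ B)).
apply: ge0_le_integral => //.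
- by move=> x _; rewrite lee_fin sqr_ge0.
- exact: measurable_funS measurableT _ mg2.
by move=> x Bx; rewrite lee_fin; have := gk x Bx; nra.
Qed.
End Square_integrals.

Lemma almost_sure_complement {dT : measure_display} {T : measurableType dT}
    {R : realType} {P : probability T R} {A : set T} :
  measurable A -> P A = 1%E -> P.-negligible (~` A).
Proof.
move=> mA PA; apply/negligibleP; first exact: measurableC.
by have := probability_setC P mA; rewrite PA subee.
Qed.

Section Ridge_functions.
Context {R : realType} {d : nat}.
Local Notation V := 'rV[R]_d.
Local Notation T := (BorelRd R d).

Definition ridge (alpha c : R) (a x : V) : R := alpha * relu (dotp a x - c).

Lemma ridge_relu_net (alpha c : R) (a : V) : relu_net (ridge alpha c a).
Proof. by exists 1%N, (fun=> alpha), (fun=> - c), (fun=> a) => x; rewrite big_ord1. Qed.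

Lemma ridge_measurable (alpha c : R) (a : V) :
  measurable_fun setT (ridge alpha c a : T -> R).
Proof.
apply: continuous_measurable_Rd => x.
change {for x, continuous ((fun=> alpha) \* ((fun y => dotp a y - c) \max (fun=> 0)))}.
apply: continuousM; first exact: cst_continuous.
apply: continuous_max; last exact: cst_continuous.
by apply: continuousB; [exact: dotp_continuous | exact: cst_continuous].
Qed.

Lemma ridge_eq0 (alpha c : R) (a x : V) : dotp a x <= c -> ridge alpha c a x = 0.
Proof. by move=> le_c; rewrite /ridge /relu max_r ?mulr0 // subr_le0. Qed.

Lemma ridge_ge (alpha c delta : R) (a x : V) : 0 <= alpha ->
  delta <= dotp a x - c -> alpha * delta <= ridge alpha c a x.
Proof.
move=> alpha_ge0 le_delta; rewrite /ridge ler_wpM2l //.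
by apply: le_trans le_delta _; rewrite /relu le_max lexx.
Qed.

Lemma dotp_gt_open (a : V) (r : R) : open [set x : V | r < dotp a x].
Proof.
apply: (@open_comp _ _ (dotp a) [set s | r < s]) => [y _|].
  exact: dotp_continuous.
exact: open_gt.
Qed.

Lemma dotp_gt_measurable (a : V) (r : R) :
  measurable ([set x : V | r < dotp a x] : set T).
Proof. by apply: open_measurable_Rd; exact: dotp_gt_open. Qed.

Definition cap (a : V) (c : R) : set V := [set x | sphere x /\ c <= dotp a x].

Lemma cap_compact (a : V) (c : R) : compact (cap a c).
Proof.
apply: sphere_subset_compact => [|x []//]; apply: closedI; first exact: sphere_closed.
apply: (@preimage_closed _ _ (dotp a) [set s | c <= s]) => [y _|].
  exact: dotp_continuous.
exact: closed_ge.
Qed.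

Lemma cap_near {a x : V} {eps : R} : 0 < eps -> sphere a ->
  cap a (1 - eps ^+ 2 / 8) x -> norm2 (a - x) < eps.
Proof.
move=> eps_gt0 Sa [Sx cx]; have := sphere_dist_sq Sa Sx.
have := norm2_ge0 (a - x); nra.
Qed.

Lemma cap_off {S : set V} {a : V} {eps : R} : 0 < eps -> sphere a ->
  eps <= dist a S -> forall x, cap a (1 - eps ^+ 2 / 8) x -> ~ S x.
Proof.
move=> eps_gt0 Sa far x capx Sx; have := cap_near eps_gt0 Sa capx.
by apply/negP; rewrite -leNgt (le_trans far (dist_le a Sx)).
Qed.
End Ridge_functions.

Section Separating_network.
Context {R : realType} {d : nat}.
Local Notation V := 'rV[R]_d.
Local Notation T := (BorelRd R d).

Lemma sphere_mass_concentrates {Q : probability T R} {A : set V} {r : R} :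
  closed A -> A `<=` @sphere R d -> r < 1 -> (0 < Q A)%E ->
  exists a q, [/\ A a, 0 < q & Q (A `&` [set x | r < dotp a x]) = q%:E].
Proof.
move=> A_closed A_sphere r_lt1 QA.
have capU x : A x -> open [set y | r < dotp x y] /\ r < dotp x x.
  by move=> /A_sphere Sx; rewrite dotp_self_sphere //; split => //; exact: dotp_gt_open.
have [a Aa Qa] := compact_mass_concentrates
  (sphere_subset_compact A_closed A_sphere) (closed_measurable_Rd A_closed) capU QA.
have mAa := measurableI _ _ (closed_measurable_Rd A_closed) (dotp_gt_measurable a r).
exists a, (fine (Q (A `&` [set x | r < dotp a x]))).
by rewrite -lte_fin fineK ?fin_num_measure.
Qed.

Lemma ridge_P_null (P : probability T R) (alpha eps : R) (a : V) :
  P (@sphere R d) = 1%E -> 0 < eps -> sphere a -> eps <= dist a (supp P) ->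
  (\int[P]_x (ridge alpha (1 - eps ^+ 2 / 8) a x ^+ 2)%:E = 0)%E.
Proof.
move=> P_sphere eps_gt0 Sa far.
have off_sphere := almost_sure_complement (closed_measurable_Rd sphere_closed) P_sphere.
have off_supp := compact_off_supp_negligible (cap_compact a _) (cap_off eps_gt0 Sa far).
apply: (integral_sq_eq0 P (ridge_measurable _ _ a) (negligibleU off_sphere off_supp)).
move=> x /not_orP[/contrapT Sx ncap]; apply: ridge_eq0; rewrite leNgt.
by apply/negP => /ltW cx; apply: ncap.
Qed.

Lemma ridge_large {mu : {measure set T -> \bar R}} {B : set V} {a : V}
    {eps q M : R} :
  measurable (B : set T) -> B `<=` [set x | 1 - eps ^+ 2 / 32 < dotp a x] ->
  mu B = q%:E -> 0 < q -> 0 < M -> 0 < eps ->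
  (M%:E <= \int[mu]_x
     (ridge (Num.sqrt (M / q) / (3 * eps ^+ 2 / 32)) (1 - eps ^+ 2 / 8) a x ^+ 2)%:E)%E.
Proof.
move=> mB B_cap muB q_gt0 M_gt0 eps_gt0; set delta := 3 * eps ^+ 2 / 32.
have delta_gt0 : 0 < delta by apply: divr_gt0; rewrite ?mulr_gt0 ?exprn_gt0.
have := integral_sq_ge mu mB (ridge_measurable _ _ a) (sqrtr_ge0 (M / q)).
rewrite [X in (_ * X)%E](_ : _ = q%:E) // -EFinM.
rewrite sqr_sqrtr ?divfK ?gt_eqF //; last by rewrite divr_ge0 // ltW.
apply => x /B_cap Ux; have delta_neq0 : delta != 0 by rewrite gt_eqF.
rewrite -[X in X <= _](divfK delta_neq0).
apply: ridge_ge; first by rewrite divr_ge0 ?sqrtr_ge0 ?ltW.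
by move: Ux; rewrite /delta /=; lra.
Qed.
End Separating_network.

Theorem mainTheorem7 (R : realType) (d : nat)
  (P Q : probability (BorelRd R d) R)
  (hP : P (@sphere R d) = 1%E) (hQ : Q (@sphere R d) = 1%E) :
  (exists eps : R, 0 < eps /\
     (0 < Q [set x | @sphere R d x /\ (eps <= dist x (supp P))%R])%E) ->
  forall M : R, 0 < M ->
    exists f : 'rV[R]_d -> R, relu_net f /\
      (\int[P]_x ((f x) ^+ 2)%:E = 0)%E /\
      (M%:E <= \int[Q]_x ((f x) ^+ 2)%:E)%E.
Proof.
move=> [eps [eps_gt0 QA]] M M_gt0.
pose A : set 'rV[R]_d := [set x | sphere x /\ eps <= dist x (supp P)].
have A_closed : closed A := closedI sphere_closed (dist_ge_closed _ _ eps_gt0).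
have r_lt1 : 1 - eps ^+ 2 / 32 < 1.
  by rewrite ltrBlDr ltrDl; apply: divr_gt0; rewrite ?exprn_gt0.
have [a [q [[Sa far] q_gt0 Qq]]] :=
  sphere_mass_concentrates A_closed (fun x Ax => Ax.1) r_lt1 QA.
have mB := measurableI _ _ (closed_measurable_Rd A_closed)
  (dotp_gt_measurable a (1 - eps ^+ 2 / 32)).
pose alpha := Num.sqrt (M / q) / (3 * eps ^+ 2 / 32).
exists (ridge alpha (1 - eps ^+ 2 / 8) a); split; first exact: ridge_relu_net.
split; first exact: ridge_P_null hP eps_gt0 Sa far.
exact: ridge_large mB (@subIsetr _ _ _) Qq q_gt0 M_gt0 eps_gt0.
Qed.
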